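(* The normalized geometric discord $\mathcal{D}$ does not attain a maximum on the set of two-qubit states of rank $2$; that is, there is no rank-$2$ two-qubit state $\rho_0$ with $\mathcal{D}(\rho_0)\ge\mathcal{D}(\rho)$ for all rank-$2$ two-qubit states $\rho$.
   Context: A two-qubit state is a density matrix (positive semidefinite, trace one) on $\mathbb{C}^2\otimes\mathbb{C}^2$, and its rank is its rank as a matrix. The set $\Omega_0$ of classical-quantum states consists of states $\sum_k p_k|\psi_k\rangle\langle\psi_k|\otimes\rho_k^B$ with $\{|\psi_k\rangle\}$ an orthonormal basis of the first qubit, $p_k\ge0$ summing to one, and $\rho_k^B$ states of the second qubit. The normalized geometric discord is $\mathcal{D}(\rho)=2\min_{\chi\in\Omega_0}\operatorname{Tr}\big((\rho-\chi)^\dagger(\rho-\chi)\big)$; its maximum over all two-qubit states is $1$. *)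

From HB Require Import structures.
From mathcomp Require Import all_boot all_order all_algebra.
From mathcomp Require Import classical_sets reals.
From mathcomp Require Import complex mxtens.
Set Implicit Arguments. Unset Strict Implicit. Unset Printing Implicit Defensive.
Import Order.TTheory GRing.Theory Num.Theory.
Local Open Scope ring_scope.
Local Open Scope classical_set_scope.

Section QDefs.
Variable R : realType.
Local Notation C := R[i].

Definition adj m n (A : 'M[C]_(m, n)) : 'M[C]_(n, m) := (map_mx Num.conj A)^T.

(* Kronecker (tensor) product; index (i,j) of C^m (x) C^n is i*n + j *)
Definition kron m1 n1 m2 n2 (A : 'M[C]_(m1, n1)) (B : 'M[C]_(m2, n2))
  : 'M[C]_(m1 * m2, n1 * n2) :=
  \matrix_(k, l) (A (mxtens_unindex k).1 (mxtens_unindex l).1 *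
                  B (mxtens_unindex k).2 (mxtens_unindex l).2).

Definition psd n (A : 'M[C]_n) : Prop :=
  adj A = A /\ forall v : 'cV[C]_n, 0 <= (adj v *m A *m v) 0 0.

Definition is_state n (A : 'M[C]_n) : Prop := psd A /\ \tr A = 1.

Definition two_qubit_state (rho : 'M[C]_(2 * 2)) : Prop := is_state rho.

Definition cq_state (chi : 'M[C]_(2 * 2)) : Prop :=
  exists (psi : 'I_2 -> 'cV[C]_2) (p : 'I_2 -> R) (rhoB : 'I_2 -> 'M[C]_2),
    (forall j k : 'I_2, (adj (psi j) *m psi k) 0 0 = (j == k)%:R) /\
    (forall k, 0 <= p k) /\ \sum_(k < 2) p k = 1 /\
    (forall k, is_state (rhoB k)) /\
    chi = \sum_(k < 2) (real_complex R (p k)) *: kron (psi k *m adj (psi k)) (rhoB k).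

Definition hs2 (rho chi : 'M[C]_(2 * 2)) : R :=
  complex.Re (\tr (adj (rho - chi) *m (rho - chi))).

(* normalized geometric discord (the min over compact Omega_0 is an inf) *)
Definition geo_discord (rho : 'M[C]_(2 * 2)) : R :=
  2 * inf [set hs2 rho chi | chi in cq_state].

End QDefs.

From HB Require Import structures.
From mathcomp Require Import all_boot all_order all_algebra.
From mathcomp Require Import classical_sets reals.
From mathcomp Require Import complex mxtens.
From mathcomp Require Import ring lra.
Import Order.TTheory GRing.Theory Num.Theory.
Local Open Scope ring_scope.
Set Implicit Arguments. Unset Strict Implicit. Unset Printing Implicit Defensive.

(* A state of rank at least 2 is mixed: its 2x2 principal minors are
   nonnegative and sum to (Tr rho)^2 - Tr rho^2, and if they all vanish rho has
   rank at most 1.  Dephasing the first qubit in the three mutually unbiased bases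
   Z, X, Y gives three classical-quantum states whose squared distances to rho add
   up to 2 Tr rho^2 - Tr rho_B^2 <= 2 Tr rho^2 - 1/2, so D(rho) < 1 on rank 2.
   Conversely, every classical-quantum state is at squared distance at least 1/2
   from the Bell state Phi+ (in Bloch coordinates this is (r.n)^2 <= |r|^2 for
   the qubit states of the decomposition), hence the rank-2 states
   rho_e = (1 - e) Phi+ + e |01><01| satisfy D(rho_e) >= 1 - 5e.  The supremum 1
   of D over rank-2 states is therefore not attained. *)

Section SesquilinearForms.
Variable R : realType.
Local Notation C := R[i].

Lemma conjC_conjc (x : C) : Num.conj x = conjc x.
Proof.
have [->|nz] := eqVneq x 0; first by rewrite conjC0 /= oppr0.
by apply: (mulfI nz); rewrite -normCK sqr_normc.
Qed.

Lemma conjCD (x y : C) : Num.conj (x + y) = Num.conj x + Num.conj y.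
Proof. exact: rmorphD. Qed.

Lemma conjCM (x y : C) : Num.conj (x * y) = Num.conj x * Num.conj y.
Proof. exact: rmorphM. Qed.

Lemma conjC_real (a : R) : Num.conj (a%:C)%C = (a%:C)%C :> C.
Proof. by rewrite conjC_conjc /= oppr0. Qed.

Lemma Re_conjC (z : C) : complex.Re (Num.conj z) = complex.Re z.
Proof. by rewrite conjC_conjc; case: z. Qed.

Lemma ReD (x y : C) : complex.Re (x + y) = complex.Re x + complex.Re y.
Proof. by case: x; case: y. Qed.

Lemma ReB (x y : C) : complex.Re (x - y) = complex.Re x - complex.Re y.
Proof. by case: x; case: y. Qed.

Lemma Re_sum (I : finType) (F : I -> C) :
  complex.Re (\sum_i F i) = \sum_i complex.Re (F i).
Proof. by apply: (big_morph _ ReD). Qed.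

Lemma Re_realM (a : R) (z : C) : complex.Re ((a%:C)%C * z) = a * complex.Re z.
Proof. by case: z => x y /=; ring. Qed.

Lemma adjmxE m n (A : 'M[C]_(m, n)) i j : adj A i j = Num.conj (A j i).
Proof. by rewrite !mxE. Qed.

Lemma adjmxK m n (A : 'M[C]_(m, n)) : adj (adj A) = A.
Proof. by apply/matrixP => i j; rewrite !adjmxE conjCK. Qed.

Lemma adjmxD m n (A B : 'M[C]_(m, n)) : adj (A + B) = adj A + adj B.
Proof. by apply/matrixP => i j; rewrite !mxE rmorphD. Qed.

Lemma adjmxZ m n (c : C) (A : 'M[C]_(m, n)) : adj (c *: A) = Num.conj c *: adj A.
Proof. by apply/matrixP => i j; rewrite !mxE rmorphM. Qed.

Lemma adjmxM m n p (A : 'M[C]_(m, n)) (B : 'M[C]_(n, p)) :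
  adj (A *m B) = adj B *m adj A.
Proof.
apply/matrixP => i j; rewrite !mxE rmorph_sum; apply: eq_bigr => k _.
by rewrite !mxE rmorphM mulrC.
Qed.

Lemma hermitian_conj n (A : 'M[C]_n) : adj A = A ->
  forall i j, Num.conj (A i j) = A j i.
Proof. by move=> hA i j; rewrite -adjmxE hA. Qed.

Definition braket n (u : 'cV[C]_n) (A : 'M[C]_n) (v : 'cV[C]_n) : C :=
  (adj u *m A *m v) 0 0.

Lemma braketE n (u : 'cV[C]_n) A v :
  braket u A v = \sum_j \sum_i Num.conj (u i 0) * A i j * v j 0.
Proof.
rewrite /braket mxE; apply: eq_bigr => j _; rewrite mxE mulr_suml.
by apply: eq_bigr => i _; rewrite adjmxE.
Qed.

Lemma braketDl n (u1 u2 v : 'cV[C]_n) A : braket (u1 + u2) A v = braket u1 A v + braket u2 A v.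
Proof. by rewrite /braket adjmxD !mulmxDl mxE. Qed.

Lemma braketDr n (u v1 v2 : 'cV[C]_n) A : braket u A (v1 + v2) = braket u A v1 + braket u A v2.
Proof. by rewrite /braket !mulmxDr mxE. Qed.

Lemma braketZl n (c : C) (u v : 'cV[C]_n) A : braket (c *: u) A v = Num.conj c * braket u A v.
Proof. by rewrite /braket adjmxZ -!scalemxAl mxE. Qed.

Lemma braketZr n (c : C) (u v : 'cV[C]_n) A : braket u A (c *: v) = c * braket u A v.
Proof. by rewrite /braket -!scalemxAr mxE. Qed.

Lemma braket_addmx n (u v : 'cV[C]_n) A B : braket u (A + B) v = braket u A v + braket u B v.
Proof. by rewrite /braket mulmxDr mulmxDl mxE. Qed.

Lemma braket_scalemx n (u v : 'cV[C]_n) c A : braket u (c *: A) v = c * braket u A v.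
Proof. by rewrite /braket -scalemxAr -scalemxAl mxE. Qed.

Lemma braket_conj n (u v : 'cV[C]_n) A : adj A = A -> Num.conj (braket u A v) = braket v A u.
Proof. by move=> hA; rewrite /braket -adjmxE !adjmxM adjmxK hA mulmxA. Qed.

Definition ev n (i : 'I_n) : 'cV[C]_n := delta_mx i 0.

Lemma braket_ev n (A : 'M[C]_n) i j : braket (ev i) A (ev j) = A i j.
Proof.
rewrite braketE (bigD1 j) //= [X in _ + X]big1 ?addr0; last first.
  by move=> k /negbTE nk; rewrite big1 // => l _; rewrite !mxE nk /= mulr0.
rewrite (bigD1 i) //= [X in _ + X]big1 ?addr0; last first.
  by move=> k /negbTE nk; rewrite !mxE nk /= conjC0 !mul0r.
by rewrite !mxE !eqxx /= conjC1 mul1r mulr1.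
Qed.

Lemma braket_lincomb n (u v : 'cV[C]_n) A x y :
  braket (x *: u + y *: v) A (x *: u + y *: v) =
  Num.conj x * x * braket u A u + Num.conj x * y * braket u A v +
  Num.conj y * x * braket v A u + Num.conj y * y * braket v A v.
Proof. by rewrite !braketDl !braketDr !braketZl !braketZr; ring. Qed.

Lemma psd_braket_ge0 n (A : 'M[C]_n) v : psd A -> 0 <= braket v A v.
Proof. by case=> _; apply. Qed.

End SesquilinearForms.

Arguments ev {R n} i.

Section Purity.
Variable R : realType.
Local Notation C := R[i].

Lemma le_mul_of_tests (a d m : R) : 0 <= a -> 0 <= d ->
  0 <= d * (a * d - m) -> 0 <= a * (a * d - m) -> 0 <= a - 2 * m + m * d ->
  m <= a * d.
Proof.
move=> ha hd h1 h2 h3.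
have [a0|apos] := eqVneq a 0.
  have [d0|dpos] := eqVneq d 0; first by move: h3; rewrite a0 d0; lra.
  have dp : 0 < d by rewrite lt_def dpos hd.
  by rewrite -subr_ge0 -(pmulr_rge0 _ dp).
have ap : 0 < a by rewrite lt_def apos ha.
by rewrite -subr_ge0 -(pmulr_rge0 _ ap).
Qed.

(* The three tests are [<w|A|w> >= 0] for [w = d u - b^* v], [b u - a v] and
   [u - b^* v], where [a = <u|A|u>], [d = <v|A|v>] and [b = <u|A|v>]. *)
Lemma psd_CauchySchwarz n (A : 'M[C]_n) (u v : 'cV[C]_n) : psd A ->
  braket u A v * braket v A u <= braket u A u * braket v A v.
Proof.
move=> hA; have [hH _] := hA; have hq w := psd_braket_ge0 w hA.
have hb : braket v A u = Num.conj (braket u A v) by rewrite braket_conj.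
have h1 := hq (braket v A v *: u + (- Num.conj (braket u A v)) *: v).
have h2 := hq (braket u A v *: u + (- braket u A u) *: v).
have h3 := hq (1 *: u + (- Num.conj (braket u A v)) *: v).
rewrite !braket_lincomb hb in h1 h2 h3.
move: h1 h2 h3 (hq u) (hq v); rewrite hb.
move: (braket u A u) (braket v A v) (braket u A v) => [a1 a2] [d1 d2] [b1 b2].
rewrite !conjC_conjc /= !lecE /=.
move=> /andP[_ h1] /andP[_ h2] /andP[_ h3] /andP[/eqP ha2 ha] /andP[/eqP hd2 hd].
subst a2 d2; apply/andP; split; first by apply/eqP; ring.
have -> : b1 * b1 - b2 * - b2 = b1 * b1 + b2 * b2 by ring.
have -> : a1 * d1 - 0 * 0 = a1 * d1 by ring.
by apply: le_mul_of_tests => //; lra.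
Qed.

Lemma mxtrace_mulmxE n (A B : 'M[C]_n) : \tr (A *m B) = \sum_i \sum_j A i j * B j i.
Proof. by apply: eq_bigr => i _; rewrite mxE. Qed.

Lemma psd_minor_ge0 n (A : 'M[C]_n) i j : psd A -> 0 <= A i i * A j j - A i j * A j i.
Proof. by move=> hA; rewrite subr_ge0 -!braket_ev psd_CauchySchwarz. Qed.

(* [v := A_kk e_i - A_ki e_k] is isotropic, so by Cauchy-Schwarz [A v = 0]:
   every column of [A] is a multiple of column [k]. *)
Lemma psd_rank_le1 n (A : 'M[C]_n) k : psd A -> A k k != 0 ->
  (forall i, A i i * A k k = A i k * A k i) -> (\rank A <= 1)%N.
Proof.
move=> hA hk hminor; have [hH _] := hA; have hc := hermitian_conj hH.
have hent i j : A j i = A j k * (A k k)^-1 * A k i.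
  pose v := A k k *: ev i + (- A k i) *: ev k.
  have hv : braket v A v = 0.
    rewrite braket_lincomb !braket_ev rmorphN !hc.
    by rewrite -[0](mulr0 (A k k)) -(subrr (A i i * A k k)) {2}hminor; ring.
  have := psd_CauchySchwarz (ev j) v hA.
  rewrite hv mulr0 -(braket_conj (ev j) v hH).
  set z := braket (ev j) A v => hz.
  have : z * Num.conj z == 0 by rewrite eq_le hz mul_conjC_ge0.
  rewrite mul_conjC_eq0 /z /v braketDr !braketZr !braket_ev => /eqP hz0.
  apply: (mulfI hk).
  have -> : A k k * (A j k * (A k k)^-1 * A k i) = A j k * A k i * (A k k / A k k)
    by ring.
  by rewrite divff // mulr1; apply/eqP; rewrite -subr_eq0 -hz0; apply/eqP; ring.
have -> : A = col k A *m ((A k k)^-1 *: row k A).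
  by apply/matrixP => j i; rewrite !mxE big_ord1 !mxE hent; ring.
exact: leq_trans (mxrankM_maxl _ _) (rank_leq_col _).
Qed.

Lemma state_purity_lt1 n (rho : 'M[C]_n) : is_state rho -> (1 < \rank rho)%N ->
  complex.Re (\tr (rho *m rho)) < 1.
Proof.
case=> hA htr hrk; rewrite ltNge; apply/negP => hP.
pose m i j := rho i i * rho j j - rho i j * rho j i.
have hm i j : 0 <= m i j := psd_minor_ge0 i j hA.
have hS_ge0 : 0 <= \sum_i \sum_j m i j by apply: sumr_ge0 => i _; apply: sumr_ge0.
have hS : \sum_i \sum_j m i j = 1 - \tr (rho *m rho).
  have -> : 1 = \tr rho * \tr rho by rewrite htr mulr1.
  rewrite mxtrace_mulmxE {1 2}/mxtrace mulr_suml -sumrB; apply: eq_bigr => i _.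
  by rewrite mulr_sumr -sumrB.
have hS0 : \sum_i \sum_j m i j = 0.
  apply/eqP; rewrite eq_le hS_ge0 andbT lecE /= (ger0_Im hS_ge0) eqxx /=.
  by rewrite hS ReB /= subr_le0.
have hm0 i j : m i j = 0.
  move/psumr_eq0P: hS0 => /(_ (fun i _ => sumr_ge0 _ (fun j _ => hm i j)) i isT).
  by move/psumr_eq0P => /(_ (fun j _ => hm i j) j isT).
have [k hk] : exists k, rho k k != 0.
  apply/existsP; apply: contraTT isT => /existsPn hall.
  have : \tr rho = 0 by apply: big1 => i _; apply/eqP; rewrite -[_ == _]negbK hall.
  by rewrite htr => /eqP; rewrite oner_eq0.
move: hrk; rewrite ltnNge (psd_rank_le1 hA hk) // => i.
by apply/eqP; rewrite -subr_eq0 -/(m i k) hm0.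
Qed.
End Purity.

Notation o0 := (@ord0 1).
Notation o1 := (@ord_max 1).

Lemma ord2P (j : 'I_2) : j = o0 \/ j = o1.
Proof. by case: j => [[|[|n]]] //= lt_n; [left | right]; apply: val_inj. Qed.

Lemma sum_ord2 (V : nmodType) (F : 'I_2 -> V) : \sum_(i < 2) F i = F o0 + F o1.
Proof. by rewrite big_ord_recr big_ord1; congr (F _ + F _); apply: val_inj. Qed.

Lemma o0_eq_o1 : (o0 == o1 :> 'I_2) = false. Proof. by []. Qed.
Lemma o1_eq_o0 : (o1 == o0 :> 'I_2) = false. Proof. by []. Qed.

Definition tidx (a b : 'I_2) : 'I_(2 * 2) := mxtens_index (a, b).

Lemma tidxK a b : mxtens_unindex (tidx a b) = (a, b).
Proof. exact: mxtens_indexK. Qed.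

Lemma tidx_eq a b a' b' : (tidx a b == tidx a' b') = (a == a') && (b == b').
Proof.
apply/eqP/andP => [h|[/eqP -> /eqP ->] //].
by have := congr1 (@mxtens_unindex 2 2) h; rewrite !tidxK => -[-> ->].
Qed.

Lemma tidx_ind (P : 'I_(2 * 2) -> Prop) : (forall a b, P (tidx a b)) -> forall i, P i.
Proof.
by move=> h i; rewrite -(mxtens_unindexK i); case: (mxtens_unindex i) => a b; apply: h.
Qed.

Lemma sum_tidx (V : nmodType) (F : 'I_(2 * 2) -> V) :
  \sum_(k < 2 * 2) F k = \sum_(a < 2) \sum_(b < 2) F (tidx a b).
Proof.
rewrite (reindex (@mxtens_index 2 2)) /=; last first.
  by exists (@mxtens_unindex 2 2) => x _; [apply: mxtens_indexK | apply: mxtens_unindexK].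
by rewrite pair_big /=; apply: eq_bigr => -[a b] _.
Qed.

Section HilbertSchmidt.
Variable R : realType.
Local Notation C := R[i].

Lemma kron_tidx m1 n1 m2 n2 (A : 'M[C]_(m1, n1)) (B : 'M[C]_(m2, n2)) a b a' b' :
  kron A B (mxtens_index (a, b)) (mxtens_index (a', b')) = A a a' * B b b'.
Proof. by rewrite mxE !mxtens_indexK. Qed.

Definition hsip n (M N : 'M[C]_n) : R := complex.Re (\tr (adj M *m N)).

Lemma hs2E (rho chi : 'M[C]_(2 * 2)) : hs2 rho chi = hsip (rho - chi) (rho - chi).
Proof. by []. Qed.

Lemma hsipE n (M N : 'M[C]_n) :
  hsip M N = complex.Re (\sum_i \sum_j Num.conj (M i j) * N i j).
Proof.
rewrite /hsip mxtrace_mulmxE exchange_big; congr complex.Re.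
by apply: eq_bigr => i _; apply: eq_bigr => j _; rewrite adjmxE.
Qed.

Lemma hsip_tidx (M N : 'M[C]_(2 * 2)) :
  hsip M N = complex.Re (\sum_(a < 2) \sum_(b < 2) \sum_(a' < 2) \sum_(b' < 2)
    Num.conj (M (tidx a b) (tidx a' b')) * N (tidx a b) (tidx a' b')).
Proof.
rewrite hsipE sum_tidx; congr complex.Re.
by apply: eq_bigr => a _; apply: eq_bigr => b _; rewrite sum_tidx.
Qed.

Lemma mxtrace_adj n (A : 'M[C]_n) : \tr (adj A) = Num.conj (\tr A).
Proof. by rewrite /adj mxtrace_tr (trace_map_mx Num.conj). Qed.

Lemma hsipC n (M N : 'M[C]_n) : hsip M N = hsip N M.
Proof. by rewrite /hsip -[adj M *m N]adjmxK adjmxM adjmxK mxtrace_adj Re_conjC. Qed.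

Lemma hsipDl n (M N K : 'M[C]_n) : hsip (M + N) K = hsip M K + hsip N K.
Proof. by rewrite /hsip adjmxD mulmxDl mxtraceD ReD. Qed.

Lemma hsipZl n (a : R) (M K : 'M[C]_n) : hsip ((a%:C)%C *: M) K = a * hsip M K.
Proof. by rewrite /hsip adjmxZ conjC_real -scalemxAl mxtraceZ Re_realM. Qed.

Lemma hsipNl n (M K : 'M[C]_n) : hsip (- M) K = - hsip M K.
Proof. by rewrite -scaleN1r -(rmorphN1 (real_complex R)) hsipZl mulN1r. Qed.

Lemma hsipDr n (M N K : 'M[C]_n) : hsip K (M + N) = hsip K M + hsip K N.
Proof. by rewrite hsipC hsipDl !(hsipC K). Qed.

Lemma hsipZr n (a : R) (M K : 'M[C]_n) : hsip K ((a%:C)%C *: M) = a * hsip K M.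
Proof. by rewrite hsipC hsipZl hsipC. Qed.

Lemma hsipNr n (M K : 'M[C]_n) : hsip K (- M) = - hsip K M.
Proof. by rewrite hsipC hsipNl hsipC. Qed.

Lemma hsip_sqrB n (M N : 'M[C]_n) :
  hsip (M - N) (M - N) = hsip M M - 2 * hsip M N + hsip N N.
Proof. by rewrite !(hsipDl, hsipDr, hsipNl, hsipNr) (hsipC N M); ring. Qed.

Lemma hsip_ge0 n (M : 'M[C]_n) : 0 <= hsip M M.
Proof.
rewrite hsipE Re_sum sumr_ge0 // => i _; rewrite Re_sum sumr_ge0 // => j _.
by case: (M i j) => a b; rewrite conjC_conjc /=; nra.
Qed.

End HilbertSchmidt.

Section ClassicalQuantum.
Variable R : realType.
Local Notation C := R[i].

Definition cq_mx (psi : 'I_2 -> 'cV[C]_2) (p : 'I_2 -> R) (rhoB : 'I_2 -> 'M[C]_2) :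
    'M[C]_(2 * 2) :=
  \sum_(k < 2) (p k)%:C%C *: kron (psi k *m adj (psi k)) (rhoB k).

Lemma cq_mxE psi p rhoB a b a' b' :
  cq_mx psi p rhoB (tidx a b) (tidx a' b') =
  \sum_(k < 2) (p k)%:C%C * (psi k a 0 * Num.conj (psi k a' 0)) * rhoB k b b'.
Proof.
rewrite /cq_mx summxE; apply: eq_bigr => k _.
by rewrite mxE kron_tidx mxE big_ord1 adjmxE mulrA.
Qed.

Definition is_onb (psi : 'I_2 -> 'cV[C]_2) :=
  forall j k, (adj (psi j) *m psi k) 0 0 = (j == k)%:R.

Lemma hsip_cq_mx psi p rhoB : is_onb psi ->
  hsip (cq_mx psi p rhoB) (cq_mx psi p rhoB) =
  p o0 ^+ 2 * hsip (rhoB o0) (rhoB o0) + p o1 ^+ 2 * hsip (rhoB o1) (rhoB o1).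
Proof.
move=> hon.
pose G j k := \sum_a Num.conj (psi j a 0) * psi k a 0.
have hG j k : G j k = (j == k)%:R.
  by rewrite -hon mxE; apply: eq_bigr => a _; rewrite adjmxE.
pose H j k := \sum_b \sum_b' Num.conj (rhoB j b b') * rhoB k b b'.
have -> : hsip (cq_mx psi p rhoB) (cq_mx psi p rhoB) = complex.Re
    (\sum_j \sum_k (p j)%:C%C * (p k)%:C%C * G j k * Num.conj (G j k) * H j k).
  rewrite hsip_tidx; congr complex.Re.
  rewrite /G /H !sum_ord2 !cq_mxE !sum_ord2.
  rewrite !(conjCD, conjCM) !conjC_real !conjCK.
  ring.
rewrite !sum_ord2 !hG /= conjC1 conjC0 !(mulr0, mul0r, add0r, addr0, mulr1).
by rewrite ReD -!rmorphM !Re_realM !hsipE /H !sum_ord2 !expr2.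
Qed.

Definition phi_plus : 'M[C]_(2 * 2) := \matrix_(i, j)
  ((((mxtens_unindex i).1 == (mxtens_unindex i).2) &&
    ((mxtens_unindex j).1 == (mxtens_unindex j).2))%:R / 2).

Lemma phi_plusE a b a' b' :
  phi_plus (tidx a b) (tidx a' b') = ((a == b) && (a' == b'))%:R / 2.
Proof. by rewrite mxE !tidxK. Qed.

Lemma conjC_phi_plus i j : Num.conj (phi_plus i j) = phi_plus i j.
Proof. by rewrite mxE conjCM fmorphV /= !conjC_nat. Qed.

Lemma Re_half (z : C) : complex.Re (z / 2) = complex.Re z / 2.
Proof.
have -> : (2 : C)^-1 = (2^-1)%:C%C by rewrite fmorphV /= rmorph_nat.
by rewrite mulrC Re_realM mulrC.
Qed.

Lemma hsip_phi_plus : hsip phi_plus phi_plus = 1.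
Proof.
rewrite hsip_tidx !sum_ord2 !phi_plusE !eqxx ?o0_eq_o1 ?o1_eq_o0.
rewrite (_ : (2 : C)^-1 = (2^-1)%:C%C); last by rewrite fmorphV /= rmorph_nat.
by rewrite /= ?conjC_conjc /=; field; rewrite ?pnatr_eq0.
Qed.

(* [<Phi+| (psi (x) phi) = <conj psi | phi> / sqrt 2], hence the conjugated vectors. *)
Lemma hsip_phi_plus_cq_mx psi p rhoB :
  hsip phi_plus (cq_mx psi p rhoB) = complex.Re
    ((p o0)%:C%C * braket (map_mx Num.conj (psi o0)) (rhoB o0) (map_mx Num.conj (psi o0)) +
     (p o1)%:C%C * braket (map_mx Num.conj (psi o1)) (rhoB o1) (map_mx Num.conj (psi o1)))
    / 2.
Proof.
rewrite hsip_tidx -Re_half; congr complex.Re.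
rewrite !sum_ord2 !conjC_phi_plus !phi_plusE !cq_mxE !braketE !sum_ord2 /= !mxE !conjCK.
ring.
Qed.

(* In Bloch coordinates [B = (1 + r.sigma)/2] and [n] the Bloch vector of the
   unit vector [w], this is [(r.n)^2 <= |r|^2]; the proof is Lagrange's identity. *)
Lemma bloch_ineq (x0 x3 y1 y2 u1 v1 u2 v2 : R) :
  x0 + x3 = 1 -> u1 ^+ 2 + v1 ^+ 2 + u2 ^+ 2 + v2 ^+ 2 = 1 ->
  (2 * (x0 * (u1 ^+ 2 + v1 ^+ 2) + x3 * (u2 ^+ 2 + v2 ^+ 2) +
        2 * (y1 * (u1 * u2 + v1 * v2) - y2 * (u1 * v2 - v1 * u2))) - 1) ^+ 2
  <= 2 * (x0 ^+ 2 + x3 ^+ 2 + 2 * (y1 ^+ 2 + y2 ^+ 2)) - 1.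
Proof.
move=> hx hu.
set X := u1 ^+ 2 + v1 ^+ 2 - (u2 ^+ 2 + v2 ^+ 2).
set z1 := u1 * u2 + v1 * v2; set z2 := u1 * v2 - v1 * u2; set s := x0 - x3.
have hX : X ^+ 2 + 4 * z1 ^+ 2 + 4 * z2 ^+ 2 = 1.
  have -> : X ^+ 2 + 4 * z1 ^+ 2 + 4 * z2 ^+ 2 = (u1 ^+ 2 + v1 ^+ 2 + u2 ^+ 2 + v2 ^+ 2) ^+ 2
    by rewrite /X /z1 /z2; ring.
  by rewrite hu expr1n.
have -> : 2 * (x0 * (u1 ^+ 2 + v1 ^+ 2) + x3 * (u2 ^+ 2 + v2 ^+ 2) +
    2 * (y1 * z1 - y2 * z2)) - 1 = s * X + 4 * (y1 * z1 - y2 * z2).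
  rewrite -[X in _ - X](mulr1 1) -[X in _ - X * _]hx -[X in _ - _ * X]hu.
  by rewrite /s /X /z1 /z2; ring.
have -> : 2 * (x0 ^+ 2 + x3 ^+ 2 + 2 * (y1 ^+ 2 + y2 ^+ 2)) - 1 =
    (s ^+ 2 + 4 * y1 ^+ 2 + 4 * y2 ^+ 2) * (X ^+ 2 + 4 * z1 ^+ 2 + 4 * z2 ^+ 2).
  by rewrite hX mulr1 -[X in _ - X](expr1n R 2) -[X in _ - X ^+ 2]hx /s; ring.
rewrite -subr_ge0.
have -> : (s ^+ 2 + 4 * y1 ^+ 2 + 4 * y2 ^+ 2) * (X ^+ 2 + 4 * z1 ^+ 2 + 4 * z2 ^+ 2) -
    (s * X + 4 * (y1 * z1 - y2 * z2)) ^+ 2 =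
    (2 * s * z1 - 2 * y1 * X) ^+ 2 + (2 * s * z2 + 2 * y2 * X) ^+ 2 +
    (4 * y1 * z2 + 4 * y2 * z1) ^+ 2 by ring.
by rewrite !addr_ge0 // sqr_ge0.
Qed.

Lemma qubit_expectation_bound (B : 'M[C]_2) (w : 'cV[C]_2) : is_state B ->
  (adj w *m w) 0 0 = 1 ->
  (2 * complex.Re (braket w B w) - 1) ^+ 2 <= 2 * hsip B B - 1.
Proof.
case=> -[hH _] htr; rewrite mxE => hw.
have hc := hermitian_conj hH.
have h01 := hc o0 o1; have h00 := hc o0 o0; have h11 := hc o1 o1.
move: htr hw; rewrite braketE hsipE /mxtrace !sum_ord2 /=.
rewrite !adjmxE; move: h01 h00 h11.
move: (B o0 o0) (B o0 o1) (B o1 o0) (B o1 o1) (w o0 0) (w o1 0).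
move=> [x0 x0'] [y1 y2] [c1 c2] [x3 x3'] [u1 v1] [u2 v2].
rewrite !conjC_conjc /= => -[<- <-] [hx0'] [hx3'].
move=> /eqP; rewrite eq_complex /= => /andP[/eqP hx _].
move=> /eqP; rewrite eq_complex /= => /andP[/eqP hu _].
have -> : x0' = 0 by lra.
have -> : x3' = 0 by lra.
have hu' : u1 ^+ 2 + v1 ^+ 2 + u2 ^+ 2 + v2 ^+ 2 = 1 by rewrite -hu; ring.
move: (bloch_ineq y1 y2 hx hu').
by congr (_ <= _); ring.
Qed.

Lemma cq_phi_plus_bound_real (p0 p1 Q0 Q1 N0 N1 : R) : 0 <= p0 -> 0 <= p1 -> p0 + p1 = 1 ->
  (2 * Q0 - 1) ^+ 2 <= 2 * N0 - 1 -> (2 * Q1 - 1) ^+ 2 <= 2 * N1 - 1 ->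
  - 1 / 2 <= p0 ^+ 2 * N0 + p1 ^+ 2 * N1 - (p0 * Q0 + p1 * Q1).
Proof.
move=> h0 h1 hs hn0 hn1.
have a0 : p0 ^+ 2 * (1 + (2 * Q0 - 1) ^+ 2) / 2 <= p0 ^+ 2 * N0.
  by have : 0 <= p0 ^+ 2 := sqr_ge0 p0; nra.
have a1 : p1 ^+ 2 * (1 + (2 * Q1 - 1) ^+ 2) / 2 <= p1 ^+ 2 * N1.
  by have : 0 <= p1 ^+ 2 := sqr_ge0 p1; nra.
have b0 := sqr_ge0 (p0 * (2 * Q0 - 1) - 1 / 2).
have b1 := sqr_ge0 (p1 * (2 * Q1 - 1) - 1 / 2).
have c := sqr_ge0 (p0 - p1).
nra.
Qed.

Lemma hs2_phi_plus_cq_ge (chi : 'M[C]_(2 * 2)) : cq_state chi -> 2^-1 <= hs2 phi_plus chi.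
Proof.
case=> psi [p [rhoB [hon [hp [hs [hst ->]]]]]].
rewrite -/(cq_mx psi p rhoB) hs2E hsip_sqrB hsip_phi_plus (hsip_cq_mx _ _ hon).
rewrite hsip_phi_plus_cq_mx ReD !Re_realM.
have hw k : (adj (map_mx Num.conj (psi k)) *m map_mx Num.conj (psi k)) 0 0 = 1.
  have := hon k k; rewrite eqxx /= mulr1n => <-; rewrite !mxE; apply: eq_bigr => a _.
  by rewrite !mxE conjCK mulrC.
have := cq_phi_plus_bound_real (hp o0) (hp o1) _
  (qubit_expectation_bound (hst o0) (hw o0)) (qubit_expectation_bound (hst o1) (hw o1)).
rewrite -sum_ord2 hs => /(_ erefl); lra.
Qed.

End ClassicalQuantum.
Arguments phi_plus {R}.

Section Dephasing.
Variable R : realType.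
Local Notation C := R[i].

Lemma onb_complete (psi : 'I_2 -> 'cV[C]_2) : is_onb psi ->
  forall a a', \sum_k psi k a 0 * Num.conj (psi k a' 0) = (a == a')%:R.
Proof.
move=> hon a a'.
pose U : 'M[C]_2 := \matrix_(a, k) psi k a 0.
have hU : adj U *m U = 1%:M.
  apply/matrixP => j k; rewrite !mxE -hon mxE; apply: eq_bigr => b _.
  by rewrite !mxE.
have /matrixP/(_ a a') := mulmx1C hU; rewrite !mxE => <-.
by apply: eq_bigr => k _; rewrite !mxE.
Qed.

Definition ketbra n (psi : 'cV[C]_n) : 'M[C]_n := psi *m adj psi.

Lemma ketbraE n (psi : 'cV[C]_n) a a' : ketbra psi a a' = psi a 0 * Num.conj (psi a' 0).
Proof. by rewrite mxE big_ord1 adjmxE. Qed.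

(* [cond_stateB rho P = Tr_A (rho (P (x) 1))], the unnormalized state of the
   second qubit after outcome [P] on the first one. *)
Definition cond_stateB (rho : 'M[C]_(2 * 2)) (P : 'M[C]_2) : 'M[C]_2 :=
  \matrix_(b, b') \sum_a \sum_a' P a' a * rho (tidx a b) (tidx a' b').

Lemma cond_stateBE rho P b b' :
  cond_stateB rho P b b' = \sum_a \sum_a' P a' a * rho (tidx a b) (tidx a' b').
Proof. by rewrite mxE. Qed.

Definition dephase (rho : 'M[C]_(2 * 2)) (P : 'I_2 -> 'M[C]_2) : 'M[C]_(2 * 2) :=
  \matrix_(i, j) \sum_k P k (mxtens_unindex i).1 (mxtens_unindex j).1 *
     cond_stateB rho (P k) (mxtens_unindex i).2 (mxtens_unindex j).2.

Lemma dephaseE rho P a b a' b' :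
  dephase rho P (tidx a b) (tidx a' b') = \sum_k P k a a' * cond_stateB rho (P k) b b'.
Proof. by rewrite mxE !tidxK. Qed.

Definition kronv (psi v : 'cV[C]_2) : 'cV[C]_(2 * 2) :=
  \col_i (psi (mxtens_unindex i).1 0 * v (mxtens_unindex i).2 0).

Lemma kronvE psi v a b : kronv psi v (tidx a b) 0 = psi a 0 * v b 0.
Proof. by rewrite mxE !tidxK. Qed.

Lemma braket_cond_stateB rho psi v :
  braket v (cond_stateB rho (ketbra psi)) v = braket (kronv psi v) rho (kronv psi v).
Proof.
rewrite !braketE !sum_tidx.
under [in RHS]eq_bigr => a _ do under eq_bigr => b _ do rewrite sum_tidx.
rewrite !sum_ord2 !cond_stateBE !sum_ord2 !ketbraE !kronvE !conjCM.
ring.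
Qed.

Lemma cond_stateB_psd rho psi : psd rho -> psd (cond_stateB rho (ketbra psi)).
Proof.
move=> hA; have [hH _] := hA; have hc := hermitian_conj hH; split; last first.
  by move=> v; have := psd_braket_ge0 (kronv psi v) hA; rewrite -braket_cond_stateB.
apply/matrixP => b b'; rewrite adjmxE !cond_stateBE !sum_ord2 !ketbraE.
by rewrite !(conjCD, conjCM) !conjCK !hc; ring.
Qed.

Lemma psd_trace_ge0 n (B : 'M[C]_n) : psd B -> 0 <= \tr B.
Proof. by move=> hB; apply: sumr_ge0 => i _; rewrite -braket_ev psd_braket_ge0. Qed.

Lemma psd_trace_eq0 n (B : 'M[C]_n) : psd B -> \tr B = 0 -> B = 0.
Proof.
move=> hB ht; have [hH _] := hB.
have hd i : B i i = 0.
  apply: (psumr_eq0P (P := xpredT) _ ht) => // k _.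
  by rewrite -braket_ev psd_braket_ge0.
apply/matrixP => i j; rewrite mxE.
have := psd_CauchySchwarz (ev i) (ev j) hB.
rewrite !braket_ev !hd mulr0 -(hermitian_conj hH i j) => h.
have : B i j * Num.conj (B i j) == 0 by rewrite eq_le h mul_conjC_ge0.
by rewrite mul_conjC_eq0 => /eqP.
Qed.

Lemma psd_ketbra n (u : 'cV[C]_n) : psd (ketbra u).
Proof.
split=> [|v]; first by rewrite /ketbra adjmxM adjmxK.
change (0 <= braket v (ketbra u) v).
have -> : braket v (ketbra u) v = (adj v *m u) 0 0 * Num.conj ((adj v *m u) 0 0).
  rewrite -adjmxE adjmxM adjmxK /braket /ketbra !mulmxA -mulmxA.
  by rewrite [in LHS]mxE big_ord1.
exact: mul_conjC_ge0.
Qed.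

Lemma ketbra_ev_state n (i : 'I_n) : is_state (ketbra (ev i : 'cV[C]_n)).
Proof.
split; first exact: psd_ketbra.
rewrite /ketbra mxtrace_mulC trace_mx11 -[adj _]mulmx1.
by rewrite -/(braket (ev i) 1%:M (ev i)) braket_ev mxE eqxx.
Qed.

Lemma psd_state_decomposition n (B : 'M[C]_n.+1) : psd B ->
  exists (p : R) (rhoB : 'M[C]_n.+1), [/\ 0 <= p, is_state rhoB & B = p%:C%C *: rhoB].
Proof.
move=> hB; have [hH _] := hB.
have htr_ge0 := psd_trace_ge0 hB.
set p := complex.Re (\tr B).
have htr : \tr B = p%:C%C by rewrite RRe_real ?ger0_real.
have hp : 0 <= p by rewrite -ler0c -htr.
have [p0|pn0] := eqVneq p 0.
  exists 0, (ketbra (ev 0)); split=> //; first exact: ketbra_ev_state.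
  by rewrite scale0r; apply: psd_trace_eq0; rewrite // htr p0.
exists p, ((p^-1)%:C%C *: B); split=> //; last first.
  by rewrite scalerA -rmorphM divff // rmorph1 scale1r.
split; last by rewrite mxtraceZ htr -rmorphM mulVf.
split=> [|v]; first by rewrite adjmxZ conjC_real hH.
change (0 <= braket v ((p^-1)%:C%C *: B) v).
by rewrite braket_scalemx mulr_ge0 ?psd_braket_ge0 // ler0c invr_ge0.
Qed.

Lemma sum_trace_cond_stateB rho (psi : 'I_2 -> 'cV[C]_2) : is_onb psi ->
  \sum_k \tr (cond_stateB rho (ketbra (psi k))) = \tr rho.
Proof.
move=> /onb_complete hcomp.
have -> : \sum_k \tr (cond_stateB rho (ketbra (psi k))) =
    \sum_b \sum_a \sum_a' (\sum_k psi k a' 0 * Num.conj (psi k a 0)) *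
      rho (tidx a b) (tidx a' b).
  by rewrite /mxtrace !sum_ord2 !cond_stateBE !sum_ord2 !ketbraE; ring.
under eq_bigr => b _ do under eq_bigr => a _ do under eq_bigr => a' _ do rewrite hcomp.
rewrite !sum_ord2 !eqxx o0_eq_o1 o1_eq_o0.
by rewrite /mxtrace sum_tidx !sum_ord2 /=; ring.
Qed.

Lemma dephase_cq_state rho (psi : 'I_2 -> 'cV[C]_2) (P : 'I_2 -> 'M[C]_2) :
  is_state rho -> is_onb psi -> (forall k, P k = ketbra (psi k)) ->
  cq_state (dephase rho P).
Proof.
move=> [hA htr] hon hP.
have -> : dephase rho P = dephase rho (fun k => ketbra (psi k)).
  by apply/matrixP => i j; rewrite !mxE; apply: eq_bigr => k _; rewrite hP.
have /fin_all_exists [d hd] : forall k : 'I_2, exists d : R * 'M[C]_2,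
    [/\ 0 <= d.1, is_state d.2 & cond_stateB rho (ketbra (psi k)) = d.1%:C%C *: d.2].
  move=> k; have [p [rhoB hrhoB]] := psd_state_decomposition (cond_stateB_psd (psi k) hA).
  by exists (p, rhoB).
exists psi, (fun k => (d k).1), (fun k => (d k).2).
have htrB k : \tr (cond_stateB rho (ketbra (psi k))) = (d k).1%:C%C.
  by have [_ [_ htrk] ->] := hd k; rewrite mxtraceZ htrk mulr1.
split=> //; split=> [k|]; first by have [] := hd k.
split.
  have := sum_trace_cond_stateB rho hon; rewrite htr.
  by under eq_bigr => k _ do rewrite htrB; rewrite -rmorph_sum => -[].
split=> [k|]; first by have [] := hd k.
change (dephase rho (fun k => ketbra (psi k)) = cq_mx psi (fun k => (d k).1) (fun k => (d k).2)).
apply/matrixP; apply: tidx_ind => a b; apply: tidx_ind => a' b'.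
rewrite dephaseE cq_mxE; apply: eq_bigr => k _.
by have [_ _ ->] := hd k; rewrite ketbraE mxE; ring.
Qed.

End Dephasing.

Section UnbiasedBases.
Variable R : realType.
Local Notation C := R[i].
Local Notation half := ((2^-1)%:C%C : C).
Local Notation i_ := ('i%C : C).

Definition projZ (k : 'I_2) : 'M[C]_2 := \matrix_(a, a') ((a == k) && (a' == k))%:R.
Definition projX (k : 'I_2) : 'M[C]_2 :=
  \matrix_(a, a') (if (a == a') || (k == o0) then half else - half).
Definition projY (k : 'I_2) : 'M[C]_2 := \matrix_(a, a')
  (if a == a' then half else if (a == o0) == (k == o0) then - (half * i_) else half * i_).

Definition qdephase (P : 'I_2 -> 'M[C]_2) (m : 'M[C]_2) : 'M[C]_2 :=
  \matrix_(a, a') \sum_k P k a a' * \sum_c \sum_c' P k c' c * m c c'.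

Lemma qdephase_defect_sum (m : 'M[C]_2) :
  hsip (m - qdephase projZ m) (m - qdephase projZ m) +
  hsip (m - qdephase projX m) (m - qdephase projX m) +
  hsip (m - qdephase projY m) (m - qdephase projY m) =
  2 * hsip m m - complex.Re (Num.conj (\tr m) * \tr m).
Proof.
rewrite !hsipE /mxtrace !sum_ord2 !mxE !sum_ord2 !mxE.
rewrite !eqxx o0_eq_o1 o1_eq_o0 /=.
move: (m o0 o0) (m o0 o1) (m o1 o0) (m o1 o1) => [x1 y1] [x2 y2] [x3 y3] [x4 y4].
rewrite !conjC_conjc /=.
by field; rewrite ?pnatr_eq0.
Qed.

Definition isqrt2 : R := Num.sqrt (2^-1).

Lemma isqrt2_sqr : isqrt2 * isqrt2 = 2^-1.
Proof. by rewrite -expr2 sqr_sqrtr // invr_ge0 ler0n. Qed.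

Definition basisZ (k : 'I_2) : 'cV[C]_2 := \col_a ((a == k)%:R).
Definition basisX (k : 'I_2) : 'cV[C]_2 :=
  \col_a (if (a == o0) || (k == o0) then isqrt2%:C%C else - isqrt2%:C%C).
Definition basisY (k : 'I_2) : 'cV[C]_2 := \col_a
  (if a == o0 then isqrt2%:C%C else if k == o0 then i_ * isqrt2%:C%C else - (i_ * isqrt2%:C%C)).

Local Ltac ord2_cases_eval :=
  repeat match goal with j : 'I_2 |- _ => case: (ord2P j) => ->; clear j end;
  rewrite ?eqxx ?o0_eq_o1 ?o1_eq_o0 /=
    ?conjC1 ?conjC0 ?conjC_conjc;
  apply/eqP; rewrite eq_complex /=; apply/andP; split; apply/eqP;
  have := isqrt2_sqr; nra.

Lemma onb_basisZ : is_onb basisZ.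
Proof. move=> j k; rewrite mxE sum_ord2 !adjmxE !mxE; ord2_cases_eval. Qed.

Lemma onb_basisX : is_onb basisX.
Proof. move=> j k; rewrite mxE sum_ord2 !adjmxE !mxE; ord2_cases_eval. Qed.

Lemma onb_basisY : is_onb basisY.
Proof. move=> j k; rewrite mxE sum_ord2 !adjmxE !mxE; ord2_cases_eval. Qed.

Lemma ketbra_basisZ k : ketbra (basisZ k) = projZ k.
Proof. apply/matrixP => a a'; rewrite ketbraE !mxE; ord2_cases_eval. Qed.

Lemma ketbra_basisX k : ketbra (basisX k) = projX k.
Proof. apply/matrixP => a a'; rewrite ketbraE !mxE; ord2_cases_eval. Qed.

Lemma ketbra_basisY k : ketbra (basisY k) = projY k.
Proof. apply/matrixP => a a'; rewrite ketbraE !mxE; ord2_cases_eval. Qed.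

End UnbiasedBases.

Section UpperBound.
Variable R : realType.
Local Notation C := R[i].

Definition blockA (M : 'M[C]_(2 * 2)) (b b' : 'I_2) : 'M[C]_2 :=
  \matrix_(a, a') M (tidx a b) (tidx a' b').

Definition ptraceA (M : 'M[C]_(2 * 2)) : 'M[C]_2 := \matrix_(b, b') \tr (blockA M b b').

Lemma hsip_blockA (M N : 'M[C]_(2 * 2)) :
  hsip M N = \sum_b \sum_b' hsip (blockA M b b') (blockA N b b').
Proof.
rewrite hsip_tidx !sum_ord2 !hsipE !sum_ord2 !mxE !ReD.
ring.
Qed.

Lemma blockA_dephase rho (P : 'I_2 -> 'M[C]_2) b b' :
  blockA (rho - dephase rho P) b b' = blockA rho b b' - qdephase P (blockA rho b b').
Proof.
apply/matrixP => a a'; rewrite !mxE !tidxK /=; congr (_ - _).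
apply: eq_bigr => k _; rewrite cond_stateBE; congr (_ * _).
by apply: eq_bigr => c _; apply: eq_bigr => c' _; rewrite mxE.
Qed.

Lemma dephase_dist_sum (rho : 'M[C]_(2 * 2)) :
  let dist P := hs2 rho (dephase rho P) in
  dist (projZ R) + dist (projX R) + dist (projY R) =
  2 * hsip rho rho - hsip (ptraceA rho) (ptraceA rho).
Proof.
rewrite /= !hs2E !hsip_blockA !(hsipE (ptraceA rho)) Re_sum.
rewrite -!big_split mulr_sumr -sumrB; apply: eq_bigr => b _.
rewrite Re_sum -!big_split mulr_sumr -sumrB; apply: eq_bigr => b' _ /=.
by rewrite !blockA_dephase qdephase_defect_sum mxE.
Qed.

Lemma ptraceA_purity_ge (rho : 'M[C]_(2 * 2)) : \tr rho = 1 ->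
  2^-1 <= hsip (ptraceA rho) (ptraceA rho).
Proof.
move=> ht.
have ht' : ptraceA rho o0 o0 + ptraceA rho o1 o1 = 1.
  by rewrite -ht !mxE /mxtrace sum_tidx !sum_ord2 !mxE; ring.
rewrite hsipE !sum_ord2; move: ht'.
move: (ptraceA rho o0 o0) (ptraceA rho o0 o1) (ptraceA rho o1 o0) (ptraceA rho o1 o1).
move=> [x1 y1] [x2 y2] [x3 y3] [x4 y4] /eqP; rewrite eq_complex /= => /andP[/eqP hx _].
rewrite ?conjC_conjc /=.
have := sqr_ge0 (x1 - x4); nra.
Qed.

End UpperBound.

Section DiscordBounds.
Variable R : realType.
Local Notation C := R[i].
Local Open Scope classical_set_scope.

Lemma cq_state_dephaseZ rho : is_state rho -> cq_state (dephase rho (projZ R)).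
Proof. by move=> h; apply: (dephase_cq_state h (onb_basisZ R)) => k; rewrite ketbra_basisZ. Qed.

Lemma cq_state_dephaseX rho : is_state rho -> cq_state (dephase rho (projX R)).
Proof. by move=> h; apply: (dephase_cq_state h (onb_basisX R)) => k; rewrite ketbra_basisX. Qed.

Lemma cq_state_dephaseY rho : is_state rho -> cq_state (dephase rho (projY R)).
Proof. by move=> h; apply: (dephase_cq_state h (onb_basisY R)) => k; rewrite ketbra_basisY. Qed.

Lemma geo_discord_le_hs2 (rho chi : 'M[C]_(2 * 2)) : cq_state chi ->
  geo_discord rho <= 2 * hs2 rho chi.
Proof.
move=> hchi; rewrite /geo_discord ler_pM2l // ge_inf //; last by exists chi.
by exists 0 => _ [chi' _ <-]; apply: hsip_ge0.
Qed.

Lemma geo_discord_ge (rho : 'M[C]_(2 * 2)) (c : R) : is_state rho ->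
  (forall chi, cq_state chi -> c <= hs2 rho chi) -> 2 * c <= geo_discord rho.
Proof.
move=> hrho hc; rewrite /geo_discord ler_pM2l // lb_le_inf //; last first.
  by move=> _ [chi hchi <-]; apply: hc.
exists (hs2 rho (dephase rho (projZ R))), (dephase rho (projZ R)) => //.
exact: cq_state_dephaseZ.
Qed.

Lemma geo_discord_lt1 (rho : 'M[C]_(2 * 2)) : is_state rho -> (1 < \rank rho)%N ->
  geo_discord rho < 1.
Proof.
move=> hrho hrank.
have hZ := geo_discord_le_hs2 rho (cq_state_dephaseZ hrho).
have hX := geo_discord_le_hs2 rho (cq_state_dephaseX hrho).
have hY := geo_discord_le_hs2 rho (cq_state_dephaseY hrho).
have hsum := dephase_dist_sum rho.
have hB := ptraceA_purity_ge (proj2 hrho).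
have hpure := state_purity_lt1 hrho hrank.
have [[hH _] _] := hrho.
rewrite /hsip hH in hsum.
move: hsum hpure hB hZ hX hY => /=; lra.
Qed.

End DiscordBounds.

Section Family.
Variable R : realType.
Local Notation C := R[i].

Definition ket01 : 'cV[C]_(2 * 2) := ev (tidx o0 o1).

Definition rho_mix (e : R) : 'M[C]_(2 * 2) :=
  (1 - e)%:C%C *: phi_plus + e%:C%C *: ketbra ket01.

Lemma ketbra_ket01E a b a' b' : ketbra ket01 (tidx a b) (tidx a' b') =
  ((a == o0) && (b == o1) && (a' == o0) && (b' == o1))%:R.
Proof.
rewrite ketbraE !mxE !tidx_eq !eqxx !andbT.
by case: (_ && _); case: (_ && _); rewrite /= ?conjC1 ?conjC0 ?mulr1 ?mulr0.
Qed.

Lemma braket_phi_plus (v : 'cV[C]_(2 * 2)) : braket v phi_plus v =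
  Num.conj (v (tidx o0 o0) 0 + v (tidx o1 o1) 0) * (v (tidx o0 o0) 0 + v (tidx o1 o1) 0) / 2.
Proof.
rewrite braketE !sum_tidx !sum_ord2 !sum_tidx !sum_ord2 !phi_plusE.
by rewrite !eqxx ?o0_eq_o1 ?o1_eq_o0 /= conjCD; ring.
Qed.

Lemma psd_phi_plus : psd (@phi_plus R).
Proof.
split=> [|v].
  by apply/matrixP => i j; rewrite adjmxE conjC_phi_plus !mxE andbC.
change (0 <= braket v phi_plus v).
by rewrite braket_phi_plus mulr_ge0 ?invr_ge0 ?ler0n // mulrC mul_conjC_ge0.
Qed.

Lemma mxtrace_phi_plus : \tr (@phi_plus R) = 1.
Proof.
rewrite /mxtrace sum_tidx !sum_ord2 !phi_plusE !eqxx ?o0_eq_o1 ?o1_eq_o0 /=.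
by field; rewrite ?pnatr_eq0.
Qed.

Lemma psd_lincomb n (A B : 'M[C]_n) (x y : R) : 0 <= x -> 0 <= y -> psd A -> psd B ->
  psd (x%:C%C *: A + y%:C%C *: B).
Proof.
move=> hx hy [hA hqA] [hB hqB]; split=> [|v].
  by rewrite adjmxD !adjmxZ !conjC_real hA hB.
change (0 <= braket v (x%:C%C *: A + y%:C%C *: B) v).
rewrite braket_addmx !braket_scalemx addr_ge0 // mulr_ge0 ?ler0c //.
- exact: hqA.
- exact: hqB.
Qed.

Lemma rho_mix_state (e : R) : 0 <= e <= 1 -> is_state (rho_mix e).
Proof.
move=> /andP[e_ge0 e_le1]; split.
  by apply: psd_lincomb; rewrite ?subr_ge0 //; [exact: psd_phi_plus | exact: psd_ketbra].
have [_ htr01] := ketbra_ev_state R (tidx o0 o1).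
by rewrite mxtraceD !mxtraceZ mxtrace_phi_plus htr01 !mulr1 -rmorphD /= subrK.
Qed.

Lemma hsip_ket01 : hsip (ketbra ket01) (ketbra ket01) = 1.
Proof.
rewrite hsip_tidx !sum_ord2 !ketbra_ket01E !eqxx ?o0_eq_o1 ?o1_eq_o0 /=.
by rewrite ?conjC_conjc /=; ring.
Qed.

Lemma hsip_phi_plus_ket01 : hsip phi_plus (ketbra ket01) = 0.
Proof.
rewrite hsip_tidx !sum_ord2 !phi_plusE !ketbra_ket01E !eqxx ?o0_eq_o1 ?o1_eq_o0 /=.
by rewrite ?conjC_conjc /=; ring.
Qed.

(* [|rho_e - chi|^2 = (1-e) |Phi+ - chi|^2 + e |E - chi|^2 - 2 e (1-e)] with
   [E = |01><01|], and [|Phi+ - chi|^2 >= 1/2]. *)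
Lemma hs2_rho_mix_ge (e : R) (chi : 'M[C]_(2 * 2)) : 0 <= e <= 1 -> cq_state chi ->
  2^-1 - 5 / 2 * e <= hs2 (rho_mix e) chi.
Proof.
move=> /andP[e_ge0 e_le1] /hs2_phi_plus_cq_ge hP.
have hE := hsip_ge0 (ketbra ket01 - chi).
rewrite hsip_sqrB hsip_ket01 in hE; rewrite hs2E hsip_sqrB hsip_phi_plus in hP.
rewrite hs2E hsip_sqrB /rho_mix !(hsipDl, hsipDr, hsipZl, hsipZr).
rewrite hsip_phi_plus hsip_ket01 (hsipC (ketbra ket01)) !hsip_phi_plus_ket01.
move: (hsip chi chi) (hsip phi_plus chi) (hsip (ketbra ket01) chi) hE hP => cc pc ec hE hP.
have hA : 0 <= e * (1 - 2 * ec + cc) by rewrite mulr_ge0.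
have hB : 0 <= (1 - e) * (1 - 2 * pc + cc - 2^-1) by rewrite mulr_ge0 // ?subr_ge0 //; lra.
nra.
Qed.

Lemma geo_discord_rho_mix_ge (e : R) : 0 <= e <= 1 -> 1 - 5 * e <= geo_discord (rho_mix e).
Proof.
move=> he; have := geo_discord_ge (rho_mix_state he) (fun chi => hs2_rho_mix_ge he).
lra.
Qed.

Definition uvec (i : 'I_(2 * 2)) : C := ((i == tidx o0 o0) || (i == tidx o1 o1))%:R.
Definition wvec (i : 'I_(2 * 2)) : C := (i == tidx o0 o1)%:R.

Definition Umix : 'M[C]_(2 * 2, 2) := \matrix_(i, j) (if j == o0 then uvec i else wvec i).
Definition Vmix (e : R) : 'M[C]_(2, 2 * 2) :=
  \matrix_(j, i) (if j == o0 then (1 - e)%:C%C / 2 * uvec i else e%:C%C * wvec i).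
Definition Xmix : 'M[C]_(2, 2 * 2) := \matrix_(j, i) (if j == o0 then uvec i / 2 else wvec i).
Definition Ymix (e : R) : 'M[C]_(2 * 2, 2) :=
  \matrix_(i, j) (if j == o0 then ((1 - e)^-1)%:C%C * uvec i else (e^-1)%:C%C * wvec i).

Lemma rho_mix_factor e : rho_mix e = Umix *m Vmix e.
Proof.
apply/matrixP; apply: tidx_ind => a b; apply: tidx_ind => a' b'.
have -> : rho_mix e (tidx a b) (tidx a' b') = (1 - e)%:C%C * phi_plus (tidx a b) (tidx a' b')
    + e%:C%C * ketbra ket01 (tidx a b) (tidx a' b') by rewrite !mxE.
rewrite phi_plusE ketbra_ket01E.
rewrite !mxE sum_ord2 !mxE /uvec /wvec !tidx_eq /=.
by case: (ord2P a) => ->; case: (ord2P b) => ->; case: (ord2P a') => ->;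
  case: (ord2P b') => ->; rewrite ?eqxx ?o0_eq_o1 ?o1_eq_o0 /= ?conjC1 ?conjC0; ring.
Qed.

Lemma Xmix_Umix : Xmix *m Umix = 1%:M.
Proof.
apply/matrixP => j j'; rewrite !mxE sum_tidx !sum_ord2 !mxE /uvec /wvec !tidx_eq.
by case: (ord2P j) => ->; case: (ord2P j') => ->; rewrite ?eqxx ?o0_eq_o1 ?o1_eq_o0 /=;
  field; rewrite ?pnatr_eq0.
Qed.

Lemma Vmix_Ymix (e : R) : 0 < e < 1 -> Vmix e *m Ymix e = 1%:M.
Proof.
move=> /andP[e_gt0 e_lt1].
apply/matrixP => j j'; rewrite !mxE sum_tidx !sum_ord2 !mxE /uvec /wvec !tidx_eq !fmorphV.
by case: (ord2P j) => ->; case: (ord2P j') => ->; rewrite ?eqxx ?o0_eq_o1 ?o1_eq_o0 /=;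
  field; apply/eqP => /(congr1 (@complex.Re R)) /=; lra.
Qed.

Lemma rank_rho_mix (e : R) : 0 < e < 1 -> \rank (rho_mix e) = 2%N.
Proof.
move=> he; apply/eqP; rewrite eqn_leq rho_mix_factor.
rewrite (leq_trans (mxrankM_maxl _ _) (rank_leq_col _)) /=.
have hXY : Xmix *m (Umix *m Vmix e) *m Ymix e = 1%:M.
  by rewrite mulmxA Xmix_Umix mul1mx Vmix_Ymix.
rewrite -[X in (X <= _)%N](mxrank1 C 2) -hXY.
exact: leq_trans (mxrankM_maxl _ _) (mxrankM_maxr _ _).
Qed.

End Family.

Theorem proposition3 (R : realType) :
  ~ exists rho0 : 'M[R[i]]_(2 * 2),
      two_qubit_state rho0 /\ \rank rho0 = 2%N /\
      forall rho : 'M[R[i]]_(2 * 2),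
        two_qubit_state rho -> \rank rho = 2%N ->
        geo_discord rho <= geo_discord rho0.
Proof.
move=> [rho0 [hrho0 [hrank0 hmax]]].
have hD1 := geo_discord_lt1 hrho0 (eq_leq (esym hrank0)).
have hD0 : 0 <= geo_discord rho0.
  by rewrite -(mulr0 2) geo_discord_ge // => chi _; apply: hsip_ge0.
pose e := (1 - geo_discord rho0) / 10.
have he : 0 < e < 1 by apply/andP; split; rewrite /e; lra.
have he' : 0 <= e <= 1 by apply/andP; split; rewrite /e; lra.
have := hmax _ (rho_mix_state he') (rank_rho_mix he).
have := geo_discord_rho_mix_ge he'.
rewrite /e; lra.
Qed.
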